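(* Let $X$ be a nonempty Polish space and, for $n\in\omega$, let $D_n,R_n$ be dense $G_\delta$ subsets of some open subsets of $X$ and $f_n:D_n\to R_n$ a continuous, open and onto map. Assume $\Delta(X)\subseteq\overline{A^f}\setminus A^f$, where $A^f=\bigcup_n\mathrm{Graph}(f_n)$. Then $(X,A^f)$ is a digraph of uncountable Borel chromatic number.
   Context: $\Delta(X)$ is the diagonal of $X$. A digraph on $X$ is a relation disjoint from $\Delta(X)$. The Borel chromatic number of a digraph $A$ on Polish $X$ is the least cardinality of a Polish $Y$ admitting a Borel $c:X\to Y$ with $c(x)\neq c(x')$ for $(x,x')\in A$; it is uncountable iff there is no Borel $c:X\to\omega$ with this property. *)

From Stdlib Require Import Reals.
Open Scope R_scope.

Section Metric.
Context {X : Type} (d : X -> X -> R).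

Definition is_metric : Prop :=
  (forall x y, 0 <= d x y) /\
  (forall x y, d x y = 0 <-> x = y) /\
  (forall x y, d x y = d y x) /\
  (forall x y z, d x z <= d x y + d y z).

Definition cauchy (s : nat -> X) : Prop :=
  forall eps, 0 < eps -> exists N, forall m n, (N <= m)%nat -> (N <= n)%nat ->
    d (s m) (s n) < eps.

Definition converges_to (s : nat -> X) (l : X) : Prop :=
  forall eps, 0 < eps -> exists N, forall n, (N <= n)%nat -> d (s n) l < eps.

Definition complete_metric : Prop :=
  forall s, cauchy s -> exists l, converges_to s l.

Definition separable_metric : Prop :=
  exists q : nat -> X, forall x eps, 0 < eps -> exists n, d x (q n) < eps.

Definition polish : Prop := is_metric /\ complete_metric /\ separable_metric.

Definition open_set (U : X -> Prop) : Prop :=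
  forall x, U x -> exists eps, 0 < eps /\ forall y, d x y < eps -> U y.

Definition in_closure (S : X -> Prop) (x : X) : Prop :=
  forall eps, 0 < eps -> exists y, S y /\ d x y < eps.

Definition G_delta (D : X -> Prop) : Prop :=
  exists U : nat -> X -> Prop, (forall n, open_set (U n)) /\
    forall x, D x <-> (forall n, U n x).

Definition dense_Gdelta_in_open (D : X -> Prop) : Prop :=
  exists O : X -> Prop, open_set O /\ (forall x, D x -> O x) /\
    (forall x, O x -> in_closure D x) /\ G_delta D.

Definition rel_open (S V : X -> Prop) : Prop :=
  exists U, open_set U /\ forall x, V x <-> (U x /\ S x).

Definition cont_open_onto (D R : X -> Prop) (f : X -> X) : Prop :=
  (forall x, D x -> R (f x)) /\
  (forall y, R y -> exists x, D x /\ f x = y) /\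
  (forall x, D x -> forall eps, 0 < eps -> exists delta, 0 < delta /\
     forall y, D y -> d x y < delta -> d (f x) (f y) < eps) /\
  (forall V, (forall x, V x -> D x) -> rel_open D V ->
     rel_open R (fun y => exists x, V x /\ f x = y)).

Definition in_closure2 (A : X -> X -> Prop) (x y : X) : Prop :=
  forall eps, 0 < eps -> exists a b, A a b /\ d x a < eps /\ d y b < eps.

Definition sigma_algebra (S : (X -> Prop) -> Prop) : Prop :=
  (forall A B, S A -> (forall x, A x <-> B x) -> S B) /\
  (forall A, S A -> S (fun x => ~ A x)) /\
  (forall A : nat -> X -> Prop, (forall n, S (A n)) -> S (fun x => exists n, A n x)).

Definition borel (B : X -> Prop) : Prop :=
  forall S, sigma_algebra S -> (forall U, open_set U -> S U) -> S B.

Definition borel_map_nat (c : X -> nat) : Prop :=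
  forall n, borel (fun x => c x = n).

Definition digraph (A : X -> X -> Prop) : Prop := forall x, ~ A x x.

Definition uncountable_borel_chromatic (A : X -> X -> Prop) : Prop :=
  ~ exists c : X -> nat, borel_map_nat c /\ forall x y, A x y -> c x <> c y.

End Metric.

Definition Af {X : Type} (D : nat -> X -> Prop) (f : nat -> X -> X) (x y : X) : Prop :=
  exists n, D n x /\ y = f n x.

(* A Borel colouring c : X -> omega has Borel, hence Baire-property, fibres;
   by the Baire category theorem some fibre c⁻¹(n) is comeagre in a nonempty
   open set U.  Since the diagonal lies in the closure of A^f, some edge
   (p, f_k p) has both ends in U.  As f_k is continuous and open and D_k, R_k
   are dense G_delta in open sets, a Baire category argument in a small
   neighbourhood of p yields z in D_k with z and f_k z both in the comeagre
   part of U, hence both coloured n: a monochromatic edge. *)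

From Stdlib Require Import Reals Lra Lia Classical ClassicalEpsilon Cantor.
Open Scope R_scope.

Section Metric_space.
Context {X : Type} (d : X -> X -> R).
Hypothesis metric_d : is_metric d.

Lemma dist_refl x : d x x = 0.
Proof. destruct metric_d as [_ [Hd _]]. now apply Hd. Qed.

Lemma dist_sym x y : d x y = d y x.
Proof. destruct metric_d as [_ [_ [Hs _]]]. apply Hs. Qed.

Lemma dist_triangle x y z : d x z <= d x y + d y z.
Proof. destruct metric_d as [_ [_ [_ Ht]]]. apply Ht. Qed.

Lemma open_ball x r : open_set d (fun y => d x y < r).
Proof.
  intros y Hy; exists (r - d x y); split; [lra|].
  intros z Hz; pose proof (dist_triangle x y z); lra.
Qed.

Lemma open_setT : open_set d (fun _ => True).
Proof. intros x _; exists 1; split; [lra | auto]. Qed.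

Lemma open_setI A B :
  open_set d A -> open_set d B -> open_set d (fun z => A z /\ B z).
Proof.
  intros HA HB z [Az Bz].
  destruct (HA z Az) as [e1 [He1 H1]], (HB z Bz) as [e2 [He2 H2]].
  exists (Rmin e1 e2); split; [now apply Rmin_glb_lt|].
  intros y Hy; pose proof (Rmin_l e1 e2); pose proof (Rmin_r e1 e2).
  split; [apply H1 | apply H2]; lra.
Qed.

Definition dense_within (V G : X -> Prop) : Prop :=
  forall Q, open_set d Q -> (exists q, Q q) -> (forall q, Q q -> V q) ->
    exists y, Q y /\ G y.

Lemma dense_within_mono V S W :
  (forall x, S x -> W x) -> dense_within V S -> dense_within V W.
Proof.
  intros SW HS Q Qo Qne QV; destruct (HS Q Qo Qne QV) as [y [Qy Sy]]; eauto.
Qed.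

Lemma dense_withinI V A B :
  open_set d A -> dense_within V A -> dense_within V B ->
  dense_within V (fun z => A z /\ B z).
Proof.
  intros Ao HA HB Q Qo Qne QV.
  destruct (HA Q Qo Qne QV) as [y [Qy Ay]].
  destruct (HB (fun z => Q z /\ A z)) as [w [[Qw Aw] Bw]].
  - now apply open_setI.
  - exists y; auto.
  - intros q [Qq _]; auto.
  - exists w; auto.
Qed.

Lemma dense_within_closure V O S :
  (forall x, V x -> O x) -> (forall x, O x -> in_closure d S x) -> dense_within V S.
Proof.
  intros VO OS Q Qo [q Qq] QV.
  destruct (Qo q Qq) as [e [epos ballQ]], (OS q (VO q (QV q Qq)) e epos) as [y [Sy Hy]].
  exists y; auto.
Qed.

Definition dense_open (G : X -> Prop) : Prop :=
  open_set d G /\ forall x eps, 0 < eps -> exists y, G y /\ d x y < eps.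

Lemma dense_open_within V G : dense_open G -> dense_within V G.
Proof.
  intros [_ Gd] Q Qo [q Qq] _.
  destruct (Qo q Qq) as [e [epos ballQ]], (Gd q e epos) as [y [Gy Hy]].
  exists y; auto.
Qed.

Lemma dense_openT : dense_open (fun _ => True).
Proof.
  split; [exact open_setT|].
  intros x eps epos; exists x; now rewrite dist_refl.
Qed.

Lemma dense_openI A B :
  dense_open A -> dense_open B -> dense_open (fun z => A z /\ B z).
Proof.
  intros [Ao Ad] [Bo Bd]; split; [now apply open_setI|].
  intros x eps epos.
  destruct (Ad x (eps / 2)) as [y [Ay Hy]]; [lra|].
  destruct (Ao y Ay) as [e [epos' ballA]].
  destruct (Bd y (Rmin e (eps / 2))) as [w [Bw Hw]]; [apply Rmin_glb_lt; lra|].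
  pose proof (Rmin_l e (eps / 2)); pose proof (Rmin_r e (eps / 2)).
  pose proof (dist_triangle x y w).
  exists w; split; [split; [apply ballA; lra | exact Bw] | lra].
Qed.

Definition dense_in_open (S : X -> Prop) : Prop :=
  exists O, open_set d O /\ (forall x, S x -> O x) /\ (forall x, O x -> in_closure d S x).

Lemma dense_Gdelta_dense_in_open S : dense_Gdelta_in_open d S -> dense_in_open S.
Proof. intros (O & Oo & SO & OS & _); exists O; auto. Qed.

Definition exterior (U : X -> Prop) : X -> Prop :=
  fun z => exists e, 0 < e /\ forall y, d z y < e -> ~ U y.

Lemma open_exterior U : open_set d (exterior U).
Proof.
  intros z [e [epos ballU]].
  exists e; split; [exact epos|]; intros y Hy.
  exists (e - d z y); split; [lra|].
  intros w Hw; apply ballU; pose proof (dist_triangle z y w); lra.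
Qed.

Lemma dense_open_union_exterior U :
  open_set d U -> dense_open (fun z => U z \/ exterior U z).
Proof.
  intros Uo; split.
  - intros z [Uz | Ez].
    + destruct (Uo z Uz) as [e [epos ballU]]; exists e; auto.
    + destruct (open_exterior U z Ez) as [e [epos ballE]]; exists e; auto.
  - intros x eps epos.
    destruct (classic (exists y, U y /\ d x y < eps)) as [[y [Uy Hy]] | none].
    + exists y; auto.
    + exists x; rewrite dist_refl; split; [right | exact epos].
      exists eps; split; [exact epos|]; intros y Hy Uy; apply none; eauto.
Qed.

(** Baire property, with "differs from an open set by a meagre set" encoded
    as "agrees with an open set on a countable intersection of dense open sets". *)
Definition baire_property (S : X -> Prop) : Prop :=
  exists U (G : nat -> X -> Prop), open_set d U /\ (forall m, dense_open (G m)) /\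
    forall z, (forall m, G m z) -> (S z <-> U z).

Definition flatten_family (G : nat -> nat -> X -> Prop) (k : nat) : X -> Prop :=
  G (fst (of_nat k)) (snd (of_nat k)).

Lemma flatten_familyP G z :
  (forall k, flatten_family G k z) <-> forall n m, G n m z.
Proof.
  split; [|intros HG k; apply HG].
  intros HG n m; specialize (HG (to_nat (n, m))).
  unfold flatten_family in HG; now rewrite cancel_of_to in HG.
Qed.

Lemma baire_property_sigma : sigma_algebra baire_property.
Proof.
  split; [|split].
  - intros A B (U & G & Uo & Gd & HU) AB.
    exists U, G; split; [exact Uo | split; [exact Gd|]].
    intros z Gz; rewrite <- AB; auto.
  - intros A (U & G & Uo & Gd & HU).
    exists (exterior U), (fun m z => G m z /\ (U z \/ exterior U z)).
    split; [apply open_exterior | split].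
    + intros m; apply dense_openI, dense_open_union_exterior; auto.
    + intros z Gz; specialize (HU z (fun m => proj1 (Gz m))).
      destruct (proj2 (Gz 0%nat)) as [Uz | [e [epos ballU]]].
      * split; [intros nA; exfalso; apply nA, HU, Uz | intros [e [epos ballU]]].
        exfalso; apply (ballU z); [rewrite dist_refl; lra | exact Uz].
      * split; [intros _; exists e; auto | intros _ Az].
        apply (ballU z); [rewrite dist_refl; lra | apply HU, Az].
  - intros A HA.
    destruct (choice _ HA) as [U HU]; destruct (choice _ HU) as [G HG].
    exists (fun z => exists n, U n z), (flatten_family G).
    split; [|split].
    + intros z [n Uz]; destruct (proj1 (HG n) z Uz) as [e [epos ballU]].
      exists e; split; [exact epos|]; intros y Hy; exists n; auto.
    + intros k; apply (HG (fst (of_nat k))).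
    + intros z Gz; rewrite flatten_familyP in Gz.
      split; intros [n Hn]; exists n; apply (HG n); auto.
Qed.

Lemma borel_baire_property S : borel d S -> baire_property S.
Proof.
  intros HS; apply HS; [exact baire_property_sigma|].
  intros U Uo; exists U, (fun _ _ => True).
  split; [exact Uo | split; [intros _; exact dense_openT | tauto]].
Qed.

Section Open_map.
Variables (D Rg : X -> Prop) (f : X -> X).
Hypothesis f_cont_open : cont_open_onto d D Rg f.

(** An open set whose trace on [D] is [D] ∩ f⁻¹(G) when [G] is open: the
    union of the balls around points of [D] that [f] maps into a ball inside [G]. *)
Definition preimage_nbhd (G : X -> Prop) : X -> Prop :=
  fun z => exists y e delta, D y /\ 0 < e /\ (forall w, d (f y) w < e -> G w) /\
    0 < delta /\ (forall w, D w -> d y w < delta -> d (f y) (f w) < e) /\ d y z < delta.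

Lemma open_preimage_nbhd G : open_set d (preimage_nbhd G).
Proof.
  intros z (y & e & delta & Dy & epos & ballG & dpos & cont & Hz).
  exists (delta - d y z); split; [lra|]; intros w Hw.
  exists y, e, delta; repeat split; auto.
  pose proof (dist_triangle y z w); lra.
Qed.

Lemma preimage_nbhd_sub G z : D z -> preimage_nbhd G z -> G (f z).
Proof.
  intros Dz (y & e & delta & Dy & epos & ballG & dpos & cont & Hz); auto.
Qed.

Lemma preimage_nbhd_self G x : open_set d G -> D x -> G (f x) -> preimage_nbhd G x.
Proof.
  intros Go Dx Gfx; destruct (Go _ Gfx) as [e [epos ballG]].
  pose proof f_cont_open as (_ & _ & cont & _).
  destruct (cont x Dx e epos) as [delta [dpos Hdelta]].
  exists x, e, delta; repeat split; auto; now rewrite dist_refl.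
Qed.

Lemma image_meets_dense_open G Q :
  dense_in_open Rg -> dense_open G -> open_set d Q -> (exists x, Q x /\ D x) ->
  exists x, Q x /\ D x /\ G (f x).
Proof.
  intros (O & Oo & RgO & ORg) [Go Gd] Qo [x0 [Qx0 Dx0]].
  destruct f_cont_open as (maps & _ & _ & open_map).
  destruct (open_map (fun x => Q x /\ D x)) as [T [To HT]].
  - intros x [_ Dx]; exact Dx.
  - exists Q; split; [exact Qo | tauto].
  - destruct (proj1 (HT (f x0))) as [Tfx0 _]; [exists x0; auto|].
    destruct (To _ Tfx0) as [eT [eTpos ballT]].
    destruct (Oo _ (RgO _ (maps _ Dx0))) as [eO [eOpos ballO]].
    set (rho := Rmin eT eO).
    assert (0 < rho /\ rho <= eT /\ rho <= eO) as (? & ? & ?)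
      by (unfold rho; repeat split; [apply Rmin_glb_lt; auto | apply Rmin_l | apply Rmin_r]).
    destruct (Gd (f x0) (rho / 2)) as [s [Gs Hs]]; [lra|].
    destruct (Go s Gs) as [eG [eGpos ballG]].
    destruct (ORg s (ballO s ltac:(lra)) (Rmin eG (rho / 2))) as [y [Rgy Hy]];
      [apply Rmin_glb_lt; lra|].
    pose proof (Rmin_l eG (rho / 2)); pose proof (Rmin_r eG (rho / 2)).
    pose proof (dist_triangle (f x0) s y).
    destruct (proj2 (HT y)) as [x [[Qx Dx] <-]]; [split; [apply ballT; lra | exact Rgy]|].
    exists x; split; [exact Qx | split; [exact Dx | apply ballG; lra]].
Qed.

Lemma dense_within_preimage_nbhd V G :
  dense_in_open Rg -> dense_open G -> dense_within V D -> dense_within V (preimage_nbhd G).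
Proof.
  intros Rg_dense G_dense D_dense Q Qo Qne QV.
  destruct (D_dense Q Qo Qne QV) as [x0 [Qx0 Dx0]].
  destruct (image_meets_dense_open G Q) as (x & Qx & Dx & Gfx); eauto.
  exists x; split; [exact Qx | apply preimage_nbhd_self; auto; apply G_dense].
Qed.

End Open_map.

Lemma shrink_ball V G x r eps :
  open_set d G -> dense_within V G -> 0 < r -> (forall y, d x y < r -> V y) ->
  0 < eps ->
  exists x' r', 0 < r' < eps /\ forall y, d x' y < 2 * r' -> d x y < r /\ G y.
Proof.
  intros Go Gd rpos ballV epos.
  destruct (Gd (fun y => d x y < r)) as [y [Hy Gy]].
  - apply open_ball.
  - exists x; now rewrite dist_refl.
  - exact ballV.
  - destruct (Go y Gy) as [e [epos' ballG]].
    set (m1 := Rmin e (r - d x y)); set (m := Rmin m1 eps).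
    assert (m1 <= e /\ m1 <= r - d x y /\ 0 < m1) as (? & ? & ?)
      by (unfold m1; repeat split; [apply Rmin_l | apply Rmin_r | apply Rmin_glb_lt; lra]).
    assert (m <= m1 /\ m <= eps /\ 0 < m) as (? & ? & ?)
      by (unfold m; repeat split; [apply Rmin_l | apply Rmin_r | apply Rmin_glb_lt; lra]).
    exists y, (m / 3); split; [lra|].
    intros w Hw; pose proof (dist_triangle x y w).
    split; [lra | apply ballG; lra].
Qed.

Hypothesis complete_d : complete_metric d.

Lemma nested_balls_converge (c : nat -> X) (r : nat -> R) :
  (forall n, 0 < r n) ->
  (forall n, r (S n) < / (INR n + 1)) ->
  (forall n y, d (c (S n)) y < 2 * r (S n) -> d (c n) y < r n) ->
  exists z, forall n, d (c (S n)) z < 2 * r (S n).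
Proof.
  intros rpos rsmall nested.
  assert (ball_mono : forall j n y, d (c (n + j)%nat) y < r (n + j)%nat -> d (c n) y < r n).
  { induction j as [|j IH]; intros n y Hy.
    - now rewrite Nat.add_0_r in Hy.
    - apply IH, nested; rewrite Nat.add_succ_r in Hy.
      pose proof (rpos (S (n + j))); lra. }
  assert (centres_in : forall n k, (n <= k)%nat -> d (c n) (c k) < r n).
  { intros n k Hnk; replace k with (n + (k - n))%nat by lia.
    apply (ball_mono (k - n)%nat); rewrite dist_refl; apply rpos. }
  assert (cauchy_c : cauchy d c).
  { intros eps epos.
    destruct (archimed_cor1 (eps / 2)) as [N [HN Npos]]; [lra|].
    assert (/ (INR N + 1) < / INR N).
    { apply Rinv_lt_contravar; [|lra].
      apply Rmult_lt_0_compat; [apply lt_0_INR; lia | pose proof (pos_INR N); lra]. }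
    exists (S N); intros m n Hm Hn.
    pose proof (centres_in _ _ Hm); pose proof (centres_in _ _ Hn).
    pose proof (rsmall N); pose proof (dist_triangle (c m) (c (S N)) (c n)).
    rewrite (dist_sym (c m) (c (S N))) in *; lra. }
  destruct (complete_d c cauchy_c) as [z Hz].
  exists z; intros n.
  destruct (Hz _ (rpos (S n))) as [N HN].
  pose proof (HN _ (Nat.le_max_l N (S n))).
  pose proof (centres_in _ _ (Nat.le_max_r N (S n))).
  pose proof (dist_triangle (c (S n)) (c (Nat.max N (S n))) z); lra.
Qed.

Theorem baire_within V (H : nat -> X -> Prop) :
  open_set d V -> (exists a, V a) -> (forall n, open_set d (H n)) ->
  (forall n, dense_within V (H n)) -> exists z, V z /\ forall n, H n z.
Proof.
  intros Vo [a Va] Ho Hd.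
  destruct (Vo a Va) as [r0 [r0pos ball0]].
  set (inside (s : X * R) := 0 < snd s /\ forall y, d (fst s) y < snd s -> V y).
  set (refines n (s s' : X * R) := 0 < snd s' < / (INR n + 1) /\
         forall y, d (fst s') y < 2 * snd s' -> d (fst s) y < snd s /\ H n y).
  (* Stated for every [s], with a trivial witness when [s] is not [inside], so
     that [choice] yields a total step function. *)
  assert (step_ex : forall p : nat * (X * R),
             exists s', inside (snd p) -> refines (fst p) (snd p) s').
  { intros [n [x r]].
    destruct (classic (inside (x, r))) as [[rpos ballV] | out]; [|exists (x, r); tauto].
    assert (0 < / (INR n + 1)) by (apply Rinv_0_lt_compat; pose proof (pos_INR n); lra).
    destruct (shrink_ball V (H n) x r (/ (INR n + 1))) as (x' & r' & small_ball); auto.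
    exists (x', r'); intros _; exact small_ball. }
  destruct (choice _ step_ex) as [step Hstep].
  set (s := fix s n := match n with O => (a, r0) | S k => step (k, s k) end).
  assert (s_inside : forall n, inside (s n) /\ refines n (s n) (s (S n))).
  { assert (inside_next : forall n, inside (s n) -> inside (s (S n))).
    { intros n IH; pose proof (Hstep (n, s n) IH) as [[rpos _] sub]; cbn in sub.
      split; [exact rpos|]; intros y Hy; apply (proj2 IH), sub; cbn in Hy; lra. }
    assert (all_inside : forall n, inside (s n)) by (induction n; [split; auto | auto]).
    intros n; split; [apply all_inside | exact (Hstep (n, s n) (all_inside n))]. }
  destruct (nested_balls_converge (fun n => fst (s n)) (fun n => snd (s n))) as [z Hz].
  - intros n; apply (s_inside n).
  - intros n; apply (s_inside n).
  - intros n y Hy; apply (s_inside n), Hy.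
  - exists z; split.
    + apply (proj1 (s_inside 0%nat)), (s_inside 0%nat), Hz.
    + intros n; apply (s_inside n), Hz.
Qed.

Lemma borel_colouring_has_open_fibre (c : X -> nat) :
  (exists x : X, True) -> borel_map_nat d c ->
  exists n U (G : nat -> X -> Prop), open_set d U /\ (exists a, U a) /\
    (forall m, dense_open (G m)) /\ forall z, (forall m, G m z) -> U z -> c z = n.
Proof.
  intros [x0 _] c_borel.
  destruct (choice _ (fun n => borel_baire_property _ (c_borel n))) as [U HU].
  destruct (choice _ HU) as [G HG].
  destruct (classic (exists n a, U n a)) as [[n [a Ua]] | empty].
  - exists n, (U n), (G n); destruct (HG n) as (Uo & Gd & HGn).
    split; [exact Uo | split; [exists a; exact Ua | split; [exact Gd|]]].
    intros z Gz Uz; now apply HGn.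
  - exfalso.
    destruct (baire_within (fun _ => True) (flatten_family G)) as [z [_ Gz]].
    + exact open_setT.
    + exists x0; exact I.
    + intros k; apply (HG (fst (of_nat k))).
    + intros k; apply dense_open_within, (HG (fst (of_nat k))).
    + rewrite flatten_familyP in Gz.
      apply empty; exists (c z), z; now apply (HG (c z)).
Qed.

(** Continuity and openness of [f] spread one edge inside [U] to an edge
    between two points of the comeagre set [⋂ G m]. *)
Lemma generic_edge D Rg f U (G : nat -> X -> Prop) p :
  cont_open_onto d D Rg f -> dense_Gdelta_in_open d D -> dense_in_open Rg ->
  open_set d U -> (forall m, dense_open (G m)) -> D p -> U p -> U (f p) ->
  exists z, D z /\ U z /\ U (f z) /\ (forall m, G m z) /\ (forall m, G m (f z)).
Proof.
  intros f_cont_open (O & Oo & DO & OD & Ud & Udo & HUd) Rg_dense Uo Gd Dp Up Ufp.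
  destruct (Uo _ Ufp) as [e [epos ballU]].
  pose proof f_cont_open as (_ & _ & cont & _).
  destruct (cont p Dp e epos) as [delta [dpos Hdelta]].
  set (V := fun z => d p z < delta /\ (O z /\ U z)).
  assert (Vo : open_set d V) by (apply open_setI; [apply open_ball | now apply open_setI]).
  assert (D_dense : dense_within V D)
    by (apply (dense_within_closure V O); [intros z Vz; apply Vz | exact OD]).
  destruct (baire_within V (fun j z => Ud j z /\ (G j z /\ preimage_nbhd D f (G j) z)))
    as (z & (Hz & _ & Uz) & HG).
  - exact Vo.
  - exists p; repeat split; auto; now rewrite dist_refl.
  - intros j; apply open_setI; [apply Udo | apply open_setI; [apply Gd | apply open_preimage_nbhd]].
  - intros j; apply dense_withinI; [apply Udo | |].
    + apply (dense_within_mono _ D); [intros x Dx; now apply HUd | exact D_dense].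
    + apply dense_withinI; [apply Gd | now apply dense_open_within |].
      now apply (dense_within_preimage_nbhd D Rg).
  - assert (Dz : D z) by (apply HUd; intros j; apply HG).
    exists z; split; [exact Dz | split; [exact Uz | split; [apply ballU, Hdelta; auto|]]].
    split; intros m; [apply HG | apply (preimage_nbhd_sub D f); [exact Dz | apply HG]].
Qed.

End Metric_space.

Theorem lemma2p1 (X : Type) (d : X -> X -> R)
  (D Rn : nat -> X -> Prop) (f : nat -> X -> X) :
  polish d ->
  (exists x : X, True) ->
  (forall n, dense_Gdelta_in_open d (D n)) ->
  (forall n, dense_Gdelta_in_open d (Rn n)) ->
  (forall n, cont_open_onto d (D n) (Rn n) (f n)) ->
  (forall x, in_closure2 d (Af D f) x x /\ ~ Af D f x x) ->
  digraph (Af D f) /\ uncountable_borel_chromatic d (Af D f).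
Proof.
  intros (metric_d & complete_d & _) inhabited_X HD HR Hf Hdiag.
  split; [intros x; apply Hdiag|].
  intros (c & c_borel & c_colouring).
  destruct (borel_colouring_has_open_fibre d metric_d complete_d c inhabited_X c_borel)
    as (n & U & G & Uo & [a Ua] & Gd & fibre).
  destruct (Uo a Ua) as [e [epos ballU]].
  destruct (proj1 (Hdiag a) e epos) as (p & q & [k [Dp ->]] & Hp & Hq).
  destruct (generic_edge d metric_d complete_d (D k) (Rn k) (f k) U G p (Hf k) (HD k)
              (dense_Gdelta_dense_in_open d _ (HR k)) Uo Gd Dp)
    as (z & Dz & Uz & Ufz & Gz & Gfz); auto.
  apply (c_colouring z (f k z)); [exists k; auto|].
  now rewrite (fibre z Gz Uz), (fibre _ Gfz Ufz).
Qed.
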